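(* Let $H$ be a $3$-tournament on $n$ vertices and let $C=v_1b_1v_2b_2\dots v_nb_nv_1$ be a Hamiltonian cycle of $H$. Then every pair $\{v_i,v_j\}$ of vertices that are not consecutive on $C$ (i.e. $j\not\equiv i\pm 1 \pmod n$) is contained in the vertex sets of at most four of the hyperarcs $b_1,\dots,b_n$. Moreover: (a) if $n=8$, there are at most two non-consecutive pairs each contained in four hyperarcs of $C$; (b) if $n=7$, there are no two non-consecutive pairs each contained in four hyperarcs of $C$, and there are at most two non-consecutive pairs each contained in at least three hyperarcs of $C$; furthermore, if there is one non-consecutive pair contained in four hyperarcs of $C$ and another contained in three hyperarcs of $C$, then every other non-consecutive pair is contained in at most one hyperarc of $C$.
   Context: For $2\le k\le n$, a $k$-tournament $H$ on $n$ vertices is a pair $(V,A)$ where $V$ is a set of $n$ vertices and $A$ is a set of $k$-tuples of distinct vertices (hyperarcs) such that for every $k$-subset $S\subseteq V$, $A$ contains exactly one of the $k!$ orderings of $S$. For a hyperarc $a=(x_1x_2\dots x_k)$ we say $x_i$ precedes $x_j$ (written $x_i a x_j$) if $i<j$. A cycle of length $m$ in $H$ is an alternating sequence $x_1a_1x_2a_2\dots x_ma_mx_1$ of distinct vertices $x_i$ and distinct hyperarcs $a_j$ such that $x_i a_i x_{i+1}$ for all $i$ (indices mod $m$); it is Hamiltonian if it contains all vertices. A pair of vertices is contained in a hyperarc if both vertices belong to the vertex set of that hyperarc; ''hyperarcs of $C$'' means $b_1,\dots,b_n$. *)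

From mathcomp Require Import all_boot.
Set Implicit Arguments. Unset Strict Implicit. Unset Printing Implicit Defensive.

Definition harc (V : finType) := (V * V * V)%type.

Definition h1 (V : finType) (a : harc V) : V := a.1.1.
Definition h2 (V : finType) (a : harc V) : V := a.1.2.
Definition h3 (V : finType) (a : harc V) : V := a.2.

Definition hverts (V : finType) (a : harc V) : {set V} :=
  [set h1 a; h2 a; h3 a].

Definition harc_distinct (V : finType) (a : harc V) : bool :=
  [&& h1 a != h2 a, h1 a != h3 a & h2 a != h3 a].

Definition hprec (V : finType) (x : V) (a : harc V) (y : V) : bool :=
  [|| (x == h1 a) && (y == h2 a),
      (x == h1 a) && (y == h3 a) |
      (x == h2 a) && (y == h3 a)].

Definition tournament3 (V : finType) (A : {set harc V}) : Prop :=
  (forall a, a \in A -> harc_distinct a) /\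
  (forall S : {set V}, #|S| = 3 ->
     #|[set a in A | hverts a == S]| = 1).

Definition ham_cycle (V : finType) (n : nat) (A : {set harc V})
  (v : 'I_n -> V) (b : 'I_n -> harc V) : Prop :=
  [/\ #|V| = n, injective v, injective b,
      (forall k, b k \in A) &
      (forall k, hprec (v k) (b k) (v (ordS k)))].

Definition noncons (n : nat) (i j : 'I_n) : bool :=
  [&& i != j, j != ordS i & i != ordS j].

Definition pcount (V : finType) (n : nat) (v : 'I_n -> V)
  (b : 'I_n -> harc V) (i j : 'I_n) : nat :=
  #|[set k : 'I_n | (v i \in hverts (b k)) && (v j \in hverts (b k))]|.

Definition ncpairs (n : nat) : {set 'I_n * 'I_n} :=
  [set p : 'I_n * 'I_n | (p.1 < p.2)%N && noncons p.1 p.2].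

(* As v is a bijection onto V, the hyperarc b_k has vertex set
   {v_k, v_(k+1), v_(w k)} for some third position w k.  A non-consecutive pair
   {v_i, v_j} can only lie in b_(i-1), b_i, b_(j-1) and b_j, and lies in exactly
   [w (i-1) = j] + [w i = j] + [w (j-1) = i] + [w j = i] of them (its codegree),
   hence in at most four.  Both endpoints x of a pair of codegree 4 satisfy
   w (w x) = x and w (x-1) = w x; no two such points are cyclically consecutive,
   so there are at most n/2 of them and at most n/4 such pairs.  For n = 7 the
   remaining claims are checked by evaluation over all maps w with w k not in
   {k, k+1} such that b_k and b_(k+1) do not span the same triple, which the
   tournament forbids. *)

From mathcomp Require Import all_boot.

Set Implicit Arguments. Unset Strict Implicit. Unset Printing Implicit Defensive.

Lemma ordS_neq n (k : 'I_n) : 1 < n -> ordS k != k.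
Proof.
move=> n_gt1; rewrite -val_eqE /=; case: k => m /= lt_mn.
have [lt_Smn | ge_Smn] := ltnP m.+1 n; first by rewrite modn_small ?gtn_eqF.
have def_n : n = m.+1 by apply/eqP; rewrite eqn_leq ge_Smn lt_mn.
by rewrite -def_n modnn eq_sym -lt0n -ltnS -def_n.
Qed.

Lemma ord_pred_neq n (k : 'I_n) : 1 < n -> ord_pred k != k.
Proof. by move=> n_gt1; rewrite -(inj_eq (@ordS_inj n)) ord_predK eq_sym ordS_neq. Qed.

Lemma eq_ord_pred n (i j : 'I_n) : (i == ord_pred j) = (ordS i == j).
Proof. by rewrite -(inj_eq (@ordS_inj n)) ord_predK. Qed.

Lemma cards3_eq3 (T : finType) (x y z : T) : (#|[set x; y; z]| == 3) = uniq [:: x; y; z].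
Proof.
rewrite -setUA cardsU1 cards2 /= !inE !negb_or andbT.
by case: (eqVneq x y); case: (eqVneq x z); case: (eqVneq y z).
Qed.

Lemma card_set_count (T : finType) (P : pred T) (s : seq T) :
  uniq s -> {subset P <= s} -> #|[set x | P x]| = count P s.
Proof.
move=> s_uniq sub; rewrite -size_filter.
have /card_uniqP <- := filter_uniq P s_uniq.
by apply: eq_card => x; rewrite inE mem_filter; apply/idP/andP => [Px|[]//]; split; last exact: sub.
Qed.

Lemma double_card_sparse n (X : {set 'I_n}) :
  {in X, forall x, ordS x \notin X} -> #|X|.*2 <= n.
Proof.
move=> sparse; rewrite -addnn -{2}(card_imset X (@ordS_inj n)) -cardsUI.
have -> : X :&: [set ordS x | x in X] = set0.
  apply/setP => y; rewrite !inE; apply/negbTE/negP => /andP[yX /imsetP[x xX eq_y]].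
  by move: (sparse x xX); rewrite -eq_y yX.
by rewrite cards0 addn0 -[leqRHS]card_ord max_card.
Qed.

Section Hyperarcs.
Variable V : finType.

Lemma card_hverts (a : harc V) : harc_distinct a -> #|hverts a| = 3.
Proof. by move=> distinct_a; apply/eqP; rewrite cards3_eq3 /= !inE !negb_or -!andbA andbT. Qed.

Lemma hprec_hverts (x y : V) (a : harc V) :
  hprec x a y -> (x \in hverts a) && (y \in hverts a).
Proof.
by rewrite /hprec /hverts !inE; case/or3P => /andP[/eqP-> /eqP->]; rewrite !eqxx ?orbT.
Qed.

Lemma tournament3_hverts_inj (A : {set harc V}) :
  tournament3 A -> {in A &, injective (@hverts V)}.
Proof.
move=> [distA uniqA] a a' aA a'A eq_a.
have /eq_leq/card_le1_eqP := uniqA _ (card_hverts (distA a aA)).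
by apply; rewrite inE ?aA ?a'A -?eq_a eqxx.
Qed.

End Hyperarcs.

Definition triple n (w : 'I_n -> 'I_n) (k : 'I_n) : {set 'I_n} := [set k; ordS k; w k].

(* [proper_triples w] says that each [triple w k] has three elements and differs
   from [triple w (ordS k)].  It and [codeg] avoid finite sets and compare
   ordinals as numbers, so that they evaluate quickly. *)
Definition proper_triples n (w : 'I_n -> 'I_n) : bool :=
  all (fun k => [&& w k != k :> nat, w k != ordS k :> nat &
                 ~~ ((w k == ordS (ordS k) :> nat) && (w (ordS k) == k :> nat))])
      (enum 'I_n).

Definition codeg n (w : 'I_n -> 'I_n) (i j : 'I_n) : nat :=
  (w (ord_pred i) == j :> nat) + (w i == j :> nat) +
  (w (ord_pred j) == i :> nat) + (w j == i :> nat).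

Section Codegree.
Variables (n : nat) (w : 'I_n -> 'I_n).

Lemma card_triple_codeg i j : 1 < n -> noncons i j ->
  #|[set k | (i \in triple w k) && (j \in triple w k)]| = codeg w i j.
Proof.
move=> n_gt1 /and3P[nij nSij nSji].
have ji : (j == i) = false by rewrite eq_sym (negbTE nij).
have ji_pred : (j == ord_pred i) = false by rewrite eq_ord_pred eq_sym (negbTE nSji).
have ij_pred : (i == ord_pred j) = false by rewrite eq_ord_pred eq_sym (negbTE nSij).
have s_uniq : uniq [:: ord_pred i; i; ord_pred j; j].
  rewrite /= !inE !negb_or (inj_eq (@ord_pred_inj n)) !ord_pred_neq // nij.
  by rewrite eq_sym ji_pred ij_pred.
rewrite (card_set_count s_uniq) /triple /=; last first.
  move=> k /andP[]; rewrite !inE => /orP[/orP[]|] /eqP Ei.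
  - by rewrite Ei eqxx orbT.
  - by rewrite Ei ordSK eqxx.
  case/orP => [/orP[]|] /eqP Ej.
  - by rewrite Ej eqxx !orbT.
  - by rewrite Ej ordSK eqxx !orbT.
  by rewrite Ei Ej eqxx in nij.
rewrite !inE !ord_predK !eqxx ji ji_pred ij_pred (negbTE nij) (negbTE nSij) (negbTE nSji) /=.
by rewrite /codeg !val_eqE !addnA addn0 ![_ == w _]eq_sym !orbT /= !andbT.
Qed.

Lemma codeg_le4 i j : codeg w i j <= 4.
Proof. by rewrite /codeg; do 4 case: (_ == _ :> nat). Qed.

Lemma codeg_eq4 i j : codeg w i j = 4 ->
  [/\ w (ord_pred i) = j, w i = j, w (ord_pred j) = i & w j = i].
Proof. by rewrite /codeg !val_eqE; do 4 case: eqP. Qed.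

Lemma card_codeg_eq4 : 1 < n ->
  4 * #|[set p in ncpairs n | codeg w p.1 p.2 == 4]| <= n.
Proof.
move=> n_gt1; set P := [set p in ncpairs n | _].
have fullP p : p \in P -> [/\ p.1 < p.2, w (ord_pred p.1) = p.2, w p.1 = p.2,
                             w (ord_pred p.2) = p.1 & w p.2 = p.1].
  by rewrite !inE => /andP[/andP[lt12 _] /eqP/codeg_eq4[]].
pose X := [set x | (w (w x) == x) && (w (ord_pred x) == w x)].
have X_sparse : {in X, forall x, ordS x \notin X}.
  move=> x; rewrite !inE ordSK => /andP[/eqP wwx _].
  apply/negP => /andP[/eqP wwSx /eqP wSx].
  by move/eqP: (ordS_neq x n_gt1); rewrite -wwSx -wSx wwx.
have card_fst : #|[set p.1 | p in P]| = #|P|.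
  apply: card_in_imset => -[p1 p2] [q1 q2] /fullP[/= _ _ wp _ _] /fullP[/= _ _ wq _ _] /= eq1.
  by rewrite -wp -wq eq1.
have card_snd : #|[set p.2 | p in P]| = #|P|.
  apply: card_in_imset => -[p1 p2] [q1 q2] /fullP[/= _ _ _ _ wp] /fullP[/= _ _ _ _ wq] /= eq2.
  by rewrite -wp -wq eq2.
have disj : [set p.1 | p in P] :&: [set p.2 | p in P] = set0.
  apply/setP => y; rewrite !inE; apply/negbTE/negP.
  case/andP => /imsetP[p pP ->] /imsetP[q qP eq_pq].
  have [lt_p _ wp1 _ _] := fullP p pP; have [lt_q _ _ _ wq2] := fullP q qP.
  have eq_q1 : q.1 = p.2 by rewrite -wq2 -eq_pq wp1.
  by move: lt_p; rewrite eq_pq -eq_q1 => /(ltn_trans lt_q); rewrite ltnn.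
have sub : [set p.1 | p in P] :|: [set p.2 | p in P] \subset X.
  apply/subsetP => y; rewrite !inE => /orP[] /imsetP[p /fullP[_ wp1 wp2 wq1 wq2] ->].
  - by rewrite wp2 wq2 wp1 !eqxx.
  - by rewrite wq2 wp2 wq1 !eqxx.
have := double_card_sparse X_sparse; have := subset_leq_card sub.
have := cardsUI [set p.1 | p in P] [set p.2 | p in P].
rewrite disj cards0 addn0 card_fst card_snd => -> le_PX le_Xn.
by apply: leq_trans le_Xn; rewrite -addnn -[4]/(2 + 2) mulnDl mul2n -addnn leq_add.
Qed.

End Codegree.

Section HamiltonianCycle.
Variables (V : finType) (n : nat) (A : {set harc V}).
Variables (v : 'I_n -> V) (b : 'I_n -> harc V).
Hypotheses (n_gt1 : 1 < n) (tourA : tournament3 A) (cycleA : ham_cycle A v b).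

Lemma exists_third_vertex k : exists x, hverts (b k) = v @: [set k; ordS k; x].
Proof.
have [cardV vinj _ bA vprec] := cycleA.
have /andP[vk vSk] := hprec_hverts (vprec k).
have vSk_neq : v (ordS k) != v k by rewrite (inj_eq vinj) ordS_neq.
have : #|hverts (b k) :\ v k :\ v (ordS k)| == 1.
  move: (card_hverts (tourA.1 _ (bA k))).
  by rewrite (cardsD1 (v k)) vk (cardsD1 (v (ordS k))) in_setD1 vSk_neq vSk !add1n => -[->].
case/cards1P => y def_y.
have /codomP[x eq_y] : y \in codom v by apply: inj_card_onto; rewrite // card_ord cardV.
exists x; by rewrite !imsetU !imset_set1 -setUA -eq_y -def_y !setD1K // in_setD1 vSk_neq vSk.
Qed.

Lemma ham_cycle_triples : exists w, forall k, hverts (b k) = v @: triple w k.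
Proof. exact: fin_all_exists exists_third_vertex. Qed.

Variable w : 'I_n -> 'I_n.
Hypothesis hw : forall k, hverts (b k) = v @: triple w k.

Lemma ham_cycle_proper_triples : proper_triples w.
Proof.
have [_ vinj binj bA _] := cycleA.
apply/allP => k _; cbv beta; rewrite !val_eqE.
have : uniq [:: k; ordS k; w k].
  by rewrite -cards3_eq3 -(card_imset _ vinj) -hw card_hverts // tourA.1.
rewrite /= !inE !negb_or andbT => /andP[/andP[_ kw] Skw].
rewrite eq_sym kw eq_sym Skw; apply/negP => /andP[/eqP wSk /eqP wSSk].
have eq_triple : triple w k = triple w (ordS k).
  by apply/setP => x; rewrite !inE wSk wSSk -orbA orbC.
have /binj eq_Sk : b (ordS k) = b k.
  by apply: (tournament3_hverts_inj tourA); rewrite ?bA // !hw eq_triple.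
by move: (ordS_neq k n_gt1); rewrite eq_Sk eqxx.
Qed.

Lemma pcount_codeg i j : noncons i j -> pcount v b i j = codeg w i j.
Proof.
have [_ vinj _ _ _] := cycleA.
move=> nij; rewrite -card_triple_codeg // /pcount.
by under eq_finset => k do rewrite !hw !(mem_imset _ _ vinj).
Qed.

Lemma ncpairs_pcount : {in ncpairs n, forall p, pcount v b p.1 p.2 = codeg w p.1 p.2}.
Proof. by move=> p; rewrite inE => /andP[_ /pcount_codeg]. Qed.

Lemma ncpairs_pcount_codeg (P : pred nat) :
  [set p in ncpairs n | P (pcount v b p.1 p.2)] = [set p in ncpairs n | P (codeg w p.1 p.2)].
Proof.
apply: eq_finset => p.
by case: (boolP (p \in ncpairs n)) => // pP; rewrite (ncpairs_pcount pP).
Qed.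

End HamiltonianCycle.

Fixpoint all_choices (T : Type) (P : seq T -> bool) (C : seq (seq T)) : bool :=
  if C is c :: C' then all (fun x => all_choices (fun s => P (x :: s)) C') c else P [::].

Lemma all_choices_map (T U : eqType) (P : seq U -> bool) (C : T -> seq U) (f : T -> U) s :
  {in s, forall x, f x \in C x} -> all_choices P (map C s) -> P (map f s).
Proof.
elim: s P => [|x s IHs] P //= fC /allP/(_ _ (fC x (mem_head x s))).
by apply: IHs => y sy; apply: fC; rewrite inE sy orbT.
Qed.

Definition third_vertex_choices n : seq (seq 'I_n) :=
  [seq [seq x <- enum 'I_n | (x != k) && (x != ordS k)] | k <- enum 'I_n].

Lemma all_choices_proper_triples n (P : seq 'I_n -> bool) (w : 'I_n -> 'I_n) :
  proper_triples w -> all_choices P (third_vertex_choices n) -> P (map w (enum 'I_n)).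
Proof.
move=> /allP w_ok; apply: all_choices_map => k _.
by rewrite mem_filter mem_enum andbT -!val_eqE; case/and3P: (w_ok k (mem_enum _ k)) => -> ->.
Qed.

Definition ncpair_seq n : seq ('I_n * 'I_n) :=
  [seq p : 'I_n * 'I_n <- [seq (i, j) | i <- enum 'I_n, j <- enum 'I_n]
     | (p.1 < p.2) && noncons p.1 p.2].

Lemma mem_ncpair_seq n (p : 'I_n * 'I_n) : (p \in ncpair_seq n) = (p \in ncpairs n).
Proof. by case: p => i j; rewrite mem_filter inE andbC allpairs_f ?mem_enum. Qed.

Lemma card_ncpairs_count n (P : pred ('I_n * 'I_n)) :
  #|[set p in ncpairs n | P p]| = count P (ncpair_seq n).
Proof.
rewrite count_filter (@card_set_count _ _ [seq (i, j) | i <- enum 'I_n, j <- enum 'I_n]).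
- by apply: eq_count => p; rewrite !inE andbC.
- by apply: allpairs_uniq; rewrite ?enum_uniq // => -[? ?] [? ?] _ _.
- by case=> i j _; rewrite allpairs_f ?mem_enum.
Qed.

Definition codeg_bounds n (P : seq ('I_n * 'I_n)) (w : 'I_n -> 'I_n) : bool :=
  let d p := codeg w p.1 p.2 in
  let H := [seq p <- P | 3 <= d p] in
  (size H <= 2) &&
  all (fun p => all (fun q => all (fun r => (r != p) ==> (r != q) ==> (d r <= 1)) P)
                  [seq q <- H | d q == 3]) [seq p <- H | d p == 4].

Lemma ncpairs_codeg_bounds n (w : 'I_n -> 'I_n) : codeg_bounds (ncpair_seq n) w ->
  #|[set p in ncpairs n | 3 <= codeg w p.1 p.2]| <= 2 /\
  (forall p q r, p \in ncpairs n -> q \in ncpairs n -> r \in ncpairs n ->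
     codeg w p.1 p.2 = 4 -> codeg w q.1 q.2 = 3 -> r != p -> r != q ->
     codeg w r.1 r.2 <= 1).
Proof.
case/andP => few3 /allP bounds; split; first by rewrite card_ncpairs_count -size_filter.
move=> p q r; rewrite -!mem_ncpair_seq => pP qP rP dp dq rp rq.
have := bounds p; rewrite mem_filter dp mem_filter dp pP => /(_ isT)/allP/(_ q).
rewrite mem_filter dq mem_filter dq qP => /(_ isT)/allP/(_ r rP).
by rewrite rp rq.
Qed.

(* [enum 'I_n] is built with [insub], whose evaluation is blocked by the opaque [idP]. *)
Lemma enum_ord7 : enum 'I_7 = traject (@ordS 7) ord0 7.
Proof. by apply: (inj_map val_inj); rewrite val_enum_ord; vm_compute. Qed.

Lemma codeg_bounds7_all : let P := ncpair_seq 7 in all_choices (fun s =>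
    proper_triples (fun k => nth ord0 s k) ==> codeg_bounds P (fun k => nth ord0 s k))
  (third_vertex_choices 7).
Proof.
rewrite /third_vertex_choices /proper_triples /ncpair_seq enum_ord7.
(* Keep the list of pairs let-bound, so that it is computed only once. *)
set P := [seq p <- _ | _]; move: @P.
by vm_compute.
Qed.

Lemma ham_cycle7_codeg_bounds (V : finType) (A : {set harc V}) (v : 'I_7 -> V)
    (b : 'I_7 -> harc V) : tournament3 A -> ham_cycle A v b ->
  exists2 w : 'I_7 -> 'I_7,
    (forall k, hverts (b k) = v @: triple w k) & codeg_bounds (ncpair_seq 7) w.
Proof.
move=> tourA cycleA; have [w hw] := ham_cycle_triples (isT : 1 < 7) tourA cycleA.
have proper := ham_cycle_proper_triples (isT : 1 < 7) tourA cycleA.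
(* [w7] agrees with [w] and has the shape that [codeg_bounds7_all] speaks about. *)
pose w7 (k : 'I_7) := nth ord0 (map w (enum 'I_7)) k.
have hw7 k : hverts (b k) = v @: triple w7 k.
  by rewrite /triple /w7 (nth_map ord0) ?size_enum_ord // nth_ord_enum; exact: hw.
exists w7 => //.
have /implyP := all_choices_proper_triples (proper _ hw) codeg_bounds7_all.
by apply; exact: proper.
Qed.

Theorem lemma2 (V : finType) (n : nat) (A : {set harc V})
  (v : 'I_n -> V) (b : 'I_n -> harc V) :
  (3 <= n)%N ->
  tournament3 A ->
  ham_cycle A v b ->
  (forall i j : 'I_n, noncons i j -> (pcount v b i j <= 4)%N) /\
  (n = 8 ->
     (#|[set p in ncpairs n | pcount v b p.1 p.2 == 4]| <= 2)%N) /\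
  (n = 7 ->
     [/\ (#|[set p in ncpairs n | pcount v b p.1 p.2 == 4]| <= 1)%N,
         (#|[set p in ncpairs n | 3 <= pcount v b p.1 p.2]| <= 2)%N &
         (forall p q r, p \in ncpairs n -> q \in ncpairs n -> r \in ncpairs n ->
            pcount v b p.1 p.2 = 4 -> pcount v b q.1 q.2 = 3 ->
            r != p -> r != q -> (pcount v b r.1 r.2 <= 1)%N)]).
Proof.
move=> n_ge3 tourA cycleA; have n_gt1 : 1 < n := ltnW n_ge3.
have [w hw] := ham_cycle_triples n_gt1 tourA cycleA.
split; first by move=> i j nij; rewrite (pcount_codeg n_gt1 cycleA hw nij) codeg_le4.
split=> [n8 | n7]; subst n.
  have := card_codeg_eq4 w n_gt1; rewrite -(ncpairs_pcount_codeg n_gt1 cycleA hw (eq_op^~ 4)).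
  by move=> le4; rewrite -(leq_pmul2l (isT : 0 < 4)).
have [w7 hw7 bounds] := ham_cycle7_codeg_bounds tourA cycleA.
have [few_ge3 rest_le1] := ncpairs_codeg_bounds bounds.
split.
- have := card_codeg_eq4 w7 n_gt1; rewrite -(ncpairs_pcount_codeg n_gt1 cycleA hw7 (eq_op^~ 4)).
  by move=> le4; rewrite -ltnS -(ltn_pmul2l (isT : 0 < 4)).
- by rewrite (ncpairs_pcount_codeg n_gt1 cycleA hw7 (leq 3)).
- move=> p q r pP qP rP.
  rewrite !(ncpairs_pcount n_gt1 cycleA hw7) //; exact: rest_le1.
Qed.
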